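(* Consider the scalar system $\dot x=u+a(t)x^2$, where $x,u\in\mathbb{R}$. Let $\lambda>0$, $k>0$, $\gamma_a>0$, $\mu(t)=e^{\lambda t}$ and $s=\mu x$. Apply the controller $$u=-(k+\lambda)x-\hat a x^2-\frac{\delta_{\Delta_a}}2x^3-\frac{\delta_{\Delta_a}}2x,\qquad \dot{\hat a}=\gamma_a\,\mu\, s\, x^2.$$ Then, for all initial conditions: 1. $V=\tfrac12 s^2+\tfrac1{2\gamma_a}(\ell_a-\hat a)^2$ satisfies $\dot V\le-ks^2$. 2. All signals $s,\hat a,x,u$ are bounded, and $|x(t)|\le Ce^{-\lambda t}$ for some constant $C$ depending on the initial conditions. 3. $\lim_{t\to\infty}\hat a(t)$ exists.
   Context: $a(t)$ is an unknown, piecewise continuous, time-varying scalar parameter. There is an unknown constant $\ell_a$ and a known constant $\delta_{\Delta_a}>0$ such that $|a(t)-\ell_a|\le\delta_{\Delta_a}$ for all $t\ge0$. *)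

From Stdlib Require Import Reals List.
From Coquelicot Require Import Coquelicot.
Open Scope R_scope.

Definition piecewise_continuous_nonneg (a : R -> R) : Prop :=
  (forall T : R, exists l : list R,
      forall t, 0 <= t <= T -> ~ In t l -> continuous a t) /\
  (forall t, 0 <= t -> exists r : R, filterlim a (at_right t) (locally r)) /\
  (forall t, 0 < t -> exists r : R, filterlim a (at_left t) (locally r)).

Definition mu (lam t : R) : R := exp (lam * t).

Definition ctrl (k lam delta x ah : R) : R :=
  - (k + lam) * x - ah * x ^ 2 - delta / 2 * x ^ 3 - delta / 2 * x.

(* Along the closed loop, s' = lambda s + mu x', and the adaptation law cancels the term in
   ell_a - ahat, leaving V' = mu^2 (-k x^2 + (a - ell_a) x^3 - delta/2 (x^4 + x^2)); since
   |a - ell_a| <= delta and |x|^3 <= (x^4 + x^2)/2, this is at most -k s^2.  Hence V is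
   nonincreasing (its derivative exists off the finitely many discontinuities of a), which
   bounds s and ahat, and x = s e^{-lambda t} decays exponentially.  Then
   |ahat'| = gamma_a |s|^3 e^{-lambda t} is integrable on [0, +oo), so ahat converges. *)

From Stdlib Require Import Reals List Lra ClassicalEpsilon.
From Coquelicot Require Import Coquelicot.
Open Scope R_scope.

Lemma locally_gt0 (t : R) : 0 < t -> locally t (fun y => 0 < y).
Proof.
  intros Ht. exists (mkposreal t Ht). intros y Hy.
  unfold ball in Hy; simpl in Hy; unfold AbsRing_ball, abs, minus, plus, opp in Hy; simpl in Hy.
  apply Rabs_def2 in Hy. lra.
Qed.

Section IntegralForm.

Variables f F : R -> R.
Hypothesis HF : forall t, 0 <= t -> is_RInt f 0 t (F t - F 0).

Lemma is_RInt_Rmax_extension (z : R) :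
  is_RInt (fun r => if Rle_dec 0 r then f r else 0) 0 z (F (Rmax 0 z) - F 0).
Proof.
  destruct (Rle_dec 0 z) as [Hz|Hz].
  - rewrite Rmax_right by lra. apply is_RInt_ext with f; [|now apply HF].
    intros r Hr. rewrite Rmin_left in Hr by lra.
    destruct (Rle_dec 0 r); [reflexivity|lra].
  - rewrite Rmax_left by lra. replace (F 0 - F 0) with (scal (z - 0) 0)
      by (unfold scal; simpl; unfold mult; simpl; ring).
    apply is_RInt_ext with (fun _ => 0); [|exact (@is_RInt_const R_NormedModule 0 z 0)].
    intros r Hr. rewrite Rmax_left in Hr by lra.
    destruct (Rle_dec 0 r); [lra|reflexivity].
Qed.

Lemma continuous_Rmax_extension (y : R) : continuous (fun z => F (Rmax 0 z)) y.
Proof.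
  apply continuous_ext with (fun z => (F (Rmax 0 z) - F 0) + F 0); [intros; simpl; ring|].
  apply (continuous_plus (fun z => F (Rmax 0 z) - F 0) (fun _ => F 0));
    [|apply continuous_const].
  apply continuous_RInt_1 with (fun r => if Rle_dec 0 r then f r else 0) 0.
  apply filter_forall, is_RInt_Rmax_extension.
Qed.

Lemma locally_Rmax_extension (t : R) : 0 < t -> locally t (fun z => F (Rmax 0 z) = F z).
Proof.
  intros Ht. generalize (locally_gt0 t Ht). apply filter_imp. intros z Hz.
  now rewrite Rmax_right by lra.
Qed.

Lemma RInt_form_continuous (t : R) : 0 < t -> continuous F t.
Proof.
  intros Ht. apply continuous_ext_loc with (fun z => F (Rmax 0 z)).
  - now apply locally_Rmax_extension.
  - apply continuous_Rmax_extension.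
Qed.

Lemma RInt_form_derive (t : R) : 0 < t -> continuous f t -> is_derive F t (f t).
Proof.
  intros Ht Hc. apply is_derive_ext_loc with (fun z => (F (Rmax 0 z) - F 0) + F 0).
  { generalize (locally_Rmax_extension t Ht). apply filter_imp. intros z Hz.
    rewrite Hz; simpl; ring. }
  pose (fz := fun r => if Rle_dec 0 r then f r else 0).
  replace (f t) with (plus (fz t) 0)
    by (unfold plus, fz; simpl; destruct (Rle_dec 0 t); [ring|lra]).
  apply (is_derive_plus (fun z => F (Rmax 0 z) - F 0) (fun _ => F 0)).
  - apply is_derive_RInt with 0; [apply filter_forall, is_RInt_Rmax_extension|].
    apply continuous_ext_loc with f; [|exact Hc].
    generalize (locally_gt0 t Ht). apply filter_imp. intros y Hy.
    unfold fz. destruct (Rle_dec 0 y); [reflexivity|lra].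
  - apply is_derive_Reals, derivable_pt_lim_const.
Qed.

End IntegralForm.

Lemma le_derive_nonpos_except_list (g : R -> R) (l : list R) (p q : R) : p <= q ->
  (forall t, p <= t <= q -> continuous g t) ->
  (forall t, p < t < q -> ~ In t l -> exists d, is_derive g t d /\ d <= 0) ->
  g q <= g p.
Proof.
  revert p q. induction l as [|c l IH]; intros p q Hpq Hc Hd.
  - destruct (Req_dec p q) as [E|E]; [subst; lra|].
    assert (pr1 : forall c, p < c < q -> derivable_pt g c).
    { intros c Hcc.
      destruct (constructive_indefinite_description _ (Hd c Hcc (fun h => h))) as [d [Hg _]].
      exists d. now apply is_derive_Reals. }
    assert (pr2 : forall c, p < c < q -> derivable_pt id c)
      by (intros; apply derivable_pt_id).
    destruct (MVT g id p q pr1 pr2) as [c [Hc' HMVT]]; [lra| | |].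
    + intros c Hcc. apply continuity_pt_filterlim, Hc; lra.
    + intros c _. apply derivable_continuous_pt, derivable_pt_id.
    + destruct (Hd c Hc' (fun h => h)) as [d [Hg Hd0]].
      rewrite (derive_pt_eq_0 g c d (pr1 c Hc')) in HMVT by now apply is_derive_Reals.
      rewrite (derive_pt_eq_0 id c 1 (pr2 c Hc')) in HMVT by apply derivable_pt_lim_id.
      unfold id in HMVT. nra.
  - (* split [p, q] at the removed point c, if it lies inside *)
    assert (Hsub : forall p' q', p <= p' -> p' <= q' -> q' <= q ->
              (p' < c < q' -> False) -> g q' <= g p').
    { intros p' q' H1 H2 H3 Hout. apply IH; [lra| intros; apply Hc; lra |].
      intros t Ht Hn. apply Hd; [lra|]. intros [E|E]; [subst; apply Hout; lra|tauto]. }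
    destruct (Rlt_dec p c); [destruct (Rlt_dec c q)|].
    + apply Rle_trans with (g c); apply Hsub; lra.
    + apply Hsub; lra.
    + apply Hsub; lra.
Qed.

Lemma cubic_le_Young (e delta X : R) : Rabs e <= delta -> e * X ^ 3 <= delta / 2 * (X ^ 4 + X ^ 2).
Proof.
  intros He.
  assert (H1 : e * X ^ 3 <= delta * Rabs X ^ 3).
  { apply Rle_trans with (Rabs (e * X ^ 3)); [apply Rle_abs|].
    rewrite Rabs_mult, <- RPow_abs.
    apply Rmult_le_compat_r; [apply pow_le, Rabs_pos|exact He]. }
  assert (H2 : Rabs X ^ 3 <= (X ^ 4 + X ^ 2) / 2).
  { replace (X ^ 4 + X ^ 2) with ((Rabs X ^ 2) ^ 2 + Rabs X ^ 2)
      by (rewrite pow2_abs; ring).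
    assert (0 <= Rabs X ^ 2 * (Rabs X - 1) ^ 2) by (apply Rmult_le_pos; apply pow2_ge_0).
    nra. }
  assert (0 <= delta) by (apply Rle_trans with (Rabs e); [apply Rabs_pos|exact He]).
  nra.
Qed.

Lemma Rabs_le_of_sqr_le (y B : R) : 0 <= B -> y ^ 2 <= B -> Rabs y <= 1 + B.
Proof.
  intros HB H. rewrite <- pow2_abs in H. assert (Hy := Rabs_pos y). nra.
Qed.

Lemma Rabs_ctrl_le (k lam delta X H Bx Bh : R) : 0 <= k + lam -> 0 <= delta ->
  Rabs X <= Bx -> Rabs H <= Bh ->
  Rabs (ctrl k lam delta X H) <=
    (k + lam) * Bx + Bh * Bx ^ 2 + delta / 2 * Bx ^ 3 + delta / 2 * Bx.
Proof.
  intros Hkl Hd HX HH. unfold ctrl.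
  assert (T : forall p q, Rabs (p - q) <= Rabs p + Rabs q).
  { intros p q. unfold Rminus. eapply Rle_trans; [apply Rabs_triang|].
    rewrite Rabs_Ropp. lra. }
  eapply Rle_trans; [apply T|]. eapply Rle_trans; [apply Rplus_le_compat_r, T|].
  eapply Rle_trans; [apply Rplus_le_compat_r, Rplus_le_compat_r, T|].
  rewrite !Rabs_mult, !Rabs_Ropp, <- !RPow_abs.
  rewrite (Rabs_right (k + lam)), (Rabs_right (delta / 2)) by lra.
  assert (Hy := Rabs_pos X). assert (Hh := Rabs_pos H).
  assert (Rabs X ^ 2 <= Bx ^ 2) by (apply pow_incr; lra).
  assert (Rabs X ^ 3 <= Bx ^ 3) by (apply pow_incr; lra).
  assert (Rabs H * Rabs X ^ 2 <= Bh * Bx ^ 2)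
    by (apply Rmult_le_compat; [lra|apply pow_le; lra|lra|lra]).
  nra.
Qed.

Lemma mu_mul_exp_opp (lam t : R) : mu lam t * exp (- lam * t) = 1.
Proof.
  unfold mu. rewrite <- exp_plus. replace (lam * t + - lam * t) with 0 by ring.
  apply exp_0.
Qed.

Lemma exp_opp_mul_1_plus_le (lam t : R) : exp (- lam * t) * (1 + lam * t) <= 1.
Proof.
  assert (H := exp_ineq1_le (lam * t)). assert (Hm := mu_mul_exp_opp lam t).
  unfold mu in Hm. assert (Hp := exp_pos (- lam * t)). nra.
Qed.

Section ExpDecayingDerivative.

Variables F f : R -> R.
Variables C lam : R.
Hypothesis Hlam : 0 < lam.
Hypothesis HF : forall t, 0 < t -> is_derive F t (f t).
Hypothesis Hf : forall t, 0 < t -> Rabs (f t) <= C * exp (- lam * t).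

(* F + (C / lam) e^{-lam t} is nonincreasing and F - (C / lam) e^{-lam t} nondecreasing. *)
Lemma Rabs_increment_le_exp (t1 t2 : R) : 0 < t1 <= t2 ->
  Rabs (F t2 - F t1) <= C / lam * exp (- lam * t1).
Proof.
  intros Ht.
  assert (HFd : forall t, t1 <= t <= t2 -> is_derive F t (f t)) by (intros; apply HF; lra).
  assert (Hcont : forall sgn t, t1 <= t <= t2 ->
            continuous (fun y => sgn * F y + C / lam * exp (- lam * y)) t).
  { intros sgn t Htt. apply continuity_pt_filterlim.
    assert (continuity_pt F t)
      by (apply derivable_continuous_pt; exists (f t); now apply is_derive_Reals, HFd).
    reg. }
  assert (Hmono : forall sgn, sgn = 1 \/ sgn = -1 ->
            sgn * F t2 + C / lam * exp (- lam * t2) <= sgn * F t1 + C / lam * exp (- lam * t1)).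
  { intros sgn Hsgn.
    apply (le_derive_nonpos_except_list (fun y => sgn * F y + C / lam * exp (- lam * y)) nil);
      [lra|intros; now apply Hcont|].
    intros t Htt _. exists (sgn * f t - C * exp (- lam * t)). split.
    - auto_derive; [exists (f t); apply HFd; lra|].
      replace (Derive (fun y => F y) t) with (f t)
        by (symmetry; apply is_derive_unique, HFd; lra).
      field; lra.
    - assert (H := Hf t ltac:(lra)). apply Rabs_le_between in H.
      destruct Hsgn; subst; lra. }
  assert (H1 := Hmono 1 (or_introl eq_refl)). assert (H2 := Hmono (-1) (or_intror eq_refl)).
  assert (0 <= C / lam * exp (- lam * t2)).
  { apply Rmult_le_pos; [|apply Rlt_le, exp_pos].
    assert (H := Hf t2 ltac:(lra)). assert (Hp := exp_pos (- lam * t2)).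
    assert (0 <= C) by (assert (Ha := Rabs_pos (f t2)); nra).
    apply Rmult_le_pos; [lra|apply Rlt_le, Rinv_0_lt_compat; lra]. }
  apply Rabs_le. lra.
Qed.

Lemma ex_lim_of_exp_decaying_derivative : exists L : R, is_lim F p_infty (Finite L).
Proof.
  pose (c := Rabs C / lam).
  assert (Hc0 : 0 <= c) by (apply Rmult_le_pos; [apply Rabs_pos|apply Rlt_le, Rinv_0_lt_compat; lra]).
  assert (Hinc : forall t1 t2, 0 < t1 <= t2 -> Rabs (F t2 - F t1) <= c * exp (- lam * t1)).
  { intros t1 t2 Ht. eapply Rle_trans; [now apply Rabs_increment_le_exp|].
    apply Rmult_le_compat_r; [apply Rlt_le, exp_pos|].
    apply Rmult_le_compat_r; [apply Rlt_le, Rinv_0_lt_compat; lra|apply Rle_abs]. }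
  destruct (proj1 (filterlim_locally_cauchy (F := Rbar_locally' p_infty) F)) as [L HL].
  2: { exists L. exact HL. }
  intros eps. assert (Heps := cond_pos eps).
  pose (T := c / (lam * eps)).
  assert (HT0 : 0 <= T)
    by (apply Rmult_le_pos; [lra|apply Rlt_le, Rinv_0_lt_compat, Rmult_lt_0_compat; lra]).
  assert (Hsmall : forall t1 t2, T < t1 <= t2 -> Rabs (F t2 - F t1) < eps).
  { intros t1 t2 Ht. eapply Rle_lt_trans; [apply Hinc; lra|].
    (* c e^{-lam t1} <= c / (1 + lam t1) < c / (lam T) = eps *)
    assert (He := exp_opp_mul_1_plus_le lam t1). assert (Hp := exp_pos (- lam * t1)).
    assert (HTe : lam * T * eps = c) by (unfold T; field; lra).
    assert (lam * T < lam * t1) by (apply Rmult_lt_compat_l; lra).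
    assert (c * exp (- lam * t1) * (1 + lam * t1) <= c) by nra.
    assert (c < eps * (1 + lam * t1)) by nra.
    nra. }
  exists (fun t => T < t). split; [now exists T|].
  intros u v Hu Hv. unfold ball; simpl; unfold AbsRing_ball, abs, minus, plus, opp; simpl.
  destruct (Rle_dec u v).
  - apply Hsmall; lra.
  - rewrite <- Rabs_Ropp. replace (- (F v + - F u)) with (F u - F v) by ring.
    apply Hsmall; lra.
Qed.

End ExpDecayingDerivative.

Section ClosedLoop.

Variables (a : R -> R) (la delta lam k ga : R) (x ah : R -> R).
Hypothesis Hpc : piecewise_continuous_nonneg a.
Hypothesis Ha : forall t, 0 <= t -> Rabs (a t - la) <= delta.
Hypothesis Hlam : 0 < lam.
Hypothesis Hk : 0 < k.
Hypothesis Hga : 0 < ga.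

Definition xdot (r : R) : R := ctrl k lam delta (x r) (ah r) + a r * x r ^ 2.
Definition ahdot (r : R) : R := ga * mu lam r * (mu lam r * x r) * x r ^ 2.
Definition sstate (t : R) : R := mu lam t * x t.
Definition lyap (t : R) : R := 1 / 2 * sstate t ^ 2 + 1 / (2 * ga) * (la - ah t) ^ 2.

Hypothesis Hx : forall t, 0 <= t -> is_RInt xdot 0 t (x t - x 0).
Hypothesis Hah : forall t, 0 <= t -> is_RInt ahdot 0 t (ah t - ah 0).

Lemma ah_derive (t : R) : 0 < t -> is_derive ah t (ahdot t).
Proof.
  intros Ht. apply (RInt_form_derive ahdot ah Hah t Ht).
  assert (continuity_pt x t) by now apply continuity_pt_filterlim, (RInt_form_continuous xdot).
  apply continuity_pt_filterlim. unfold ahdot, mu. reg.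
Qed.

Lemma x_derive (t : R) : 0 < t -> continuous a t -> is_derive x t (xdot t).
Proof.
  intros Ht Hc. apply (RInt_form_derive xdot x Hx t Ht).
  assert (continuity_pt x t) by now apply continuity_pt_filterlim, (RInt_form_continuous xdot).
  assert (continuity_pt ah t) by now apply continuity_pt_filterlim, (RInt_form_continuous ahdot).
  apply continuity_pt_filterlim in Hc. apply continuity_pt_filterlim.
  unfold xdot, ctrl. reg.
Qed.

Lemma lyap_derive_le (t : R) : 0 < t -> continuous a t ->
  exists d, is_derive lyap t d /\ d <= - k * sstate t ^ 2.
Proof.
  intros Ht Hc. assert (Hxd := x_derive t Ht Hc). assert (Had := ah_derive t Ht).
  exists (sstate t * (lam * sstate t + mu lam t * xdot t) - 1 / ga * (la - ah t) * ahdot t).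
  split.
  - unfold lyap, sstate, mu. auto_derive.
    + split; [now exists (xdot t)|split; [now exists (ahdot t)|exact I]].
    + replace (Derive (fun y => x y) t) with (xdot t) by (symmetry; now apply is_derive_unique).
      replace (Derive (fun y => ah y) t) with (ahdot t) by (symmetry; now apply is_derive_unique).
      field. lra.
  - (* the adaptation law cancels the term (a - ahat) x^3 down to (a - ell_a) x^3 *)
    assert (HY := cubic_le_Young (a t - la) delta (x t) (Ha t (Rlt_le _ _ Ht))).
    assert (Hm := pow2_ge_0 (mu lam t)).
    replace (sstate t * (lam * sstate t + mu lam t * xdot t) - 1 / ga * (la - ah t) * ahdot t)
      with (- k * sstate t ^ 2
            + mu lam t ^ 2 * ((a t - la) * x t ^ 3 - delta / 2 * (x t ^ 4 + x t ^ 2)))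
      by (unfold sstate, xdot, ahdot, ctrl; field; lra).
    assert (0 <= mu lam t ^ 2 * (delta / 2 * (x t ^ 4 + x t ^ 2) - (a t - la) * x t ^ 3))
      by (apply Rmult_le_pos; lra).
    lra.
Qed.

Lemma lyap_nonneg (t : R) : 0 <= lyap t.
Proof.
  unfold lyap. assert (0 <= sstate t ^ 2) by apply pow2_ge_0.
  assert (0 <= (la - ah t) ^ 2) by apply pow2_ge_0.
  assert (0 < 1 / (2 * ga)) by (apply Rdiv_lt_0_compat; lra). nra.
Qed.

Lemma lyap_le_init (t : R) : 0 <= t -> lyap t <= lyap 0.
Proof.
  intros Ht. destruct (proj1 Hpc t) as [l Hl].
  (* lyap read through Rmax 0 is continuous at 0 and agrees with lyap on [0, +oo) *)
  pose (X := fun y => x (Rmax 0 y)). pose (A := fun y => ah (Rmax 0 y)).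
  pose (Vext := fun y => 1 / 2 * (mu lam y * X y) ^ 2 + 1 / (2 * ga) * (la - A y) ^ 2).
  assert (HVext : forall y, 0 <= y -> Vext y = lyap y)
    by (intros y Hy; unfold Vext, X, A, lyap, sstate; now rewrite Rmax_right).
  rewrite <- (HVext t Ht), <- (HVext 0 (Rle_refl 0)).
  apply (le_derive_nonpos_except_list Vext l 0 t Ht).
  - intros y _. apply continuity_pt_filterlim.
    assert (continuity_pt X y)
      by apply continuity_pt_filterlim, (continuous_Rmax_extension xdot x Hx).
    assert (continuity_pt A y)
      by apply continuity_pt_filterlim, (continuous_Rmax_extension ahdot ah Hah).
    unfold Vext, mu. reg.
  - intros y Hy Hn.
    destruct (lyap_derive_le y (proj1 Hy) (Hl y ltac:(lra) Hn)) as [d [Hd Hdk]].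
    exists d. split.
    + apply is_derive_ext_loc with lyap; [|exact Hd].
      generalize (locally_gt0 y (proj1 Hy)). apply filter_imp. intros z Hz.
      symmetry. apply HVext. lra.
    + assert (0 <= sstate y ^ 2) by apply pow2_ge_0. nra.
Qed.

Lemma Rabs_sstate_le (t : R) : 0 <= t -> Rabs (sstate t) <= 1 + 2 * lyap 0.
Proof.
  intros Ht. assert (HV := lyap_le_init t Ht). assert (H0 := lyap_nonneg 0).
  apply Rabs_le_of_sqr_le; [lra|]. set (V0 := lyap 0) in *. unfold lyap in HV.
  assert (0 <= (la - ah t) ^ 2) by apply pow2_ge_0.
  assert (0 < 1 / (2 * ga)) by (apply Rdiv_lt_0_compat; lra). nra.
Qed.

Lemma Rabs_ah_le (t : R) : 0 <= t -> Rabs (ah t) <= Rabs la + (1 + 2 * ga * lyap 0).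
Proof.
  intros Ht. assert (HV := lyap_le_init t Ht). assert (H0 := lyap_nonneg 0).
  assert (Hsq : (la - ah t) ^ 2 <= 2 * ga * lyap 0).
  { set (V0 := lyap 0) in *. unfold lyap in HV. assert (0 <= sstate t ^ 2) by apply pow2_ge_0.
    replace ((la - ah t) ^ 2) with (2 * ga * (1 / (2 * ga) * (la - ah t) ^ 2)) by (field; lra).
    apply Rmult_le_compat_l; lra. }
  assert (Hb := Rabs_le_of_sqr_le (la - ah t) (2 * ga * lyap 0) ltac:(nra) Hsq).
  replace (ah t) with (la - (la - ah t)) by ring.
  eapply Rle_trans; [apply Rabs_triang|]. rewrite Rabs_Ropp. lra.
Qed.

Lemma x_eq_sstate_exp (t : R) : x t = sstate t * exp (- lam * t).
Proof.
  unfold sstate. rewrite (Rmult_comm (mu lam t) (x t)), Rmult_assoc, mu_mul_exp_opp. ring.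
Qed.

Lemma Rabs_x_le_exp (t : R) : 0 <= t -> Rabs (x t) <= (1 + 2 * lyap 0) * exp (- lam * t).
Proof.
  intros Ht. rewrite x_eq_sstate_exp, Rabs_mult, (Rabs_right (exp _))
    by apply Rle_ge, Rlt_le, exp_pos.
  apply Rmult_le_compat_r; [apply Rlt_le, exp_pos|now apply Rabs_sstate_le].
Qed.

Lemma Rabs_x_le (t : R) : 0 <= t -> Rabs (x t) <= 1 + 2 * lyap 0.
Proof.
  intros Ht. eapply Rle_trans; [now apply Rabs_x_le_exp|].
  assert (He := exp_opp_mul_1_plus_le lam t). assert (Hp := exp_pos (- lam * t)).
  assert (H0 := lyap_nonneg 0). assert (0 <= lam * t) by nra. nra.
Qed.

Lemma Rabs_ahdot_le (t : R) : 0 <= t ->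
  Rabs (ahdot t) <= ga * (1 + 2 * lyap 0) ^ 3 * exp (- lam * t).
Proof.
  intros Ht.
  replace (ahdot t) with (ga * sstate t ^ 3 * exp (- lam * t)).
  2: { unfold ahdot, sstate.
       rewrite <- (Rmult_1_r (ga * _ * _ * _)), <- (mu_mul_exp_opp lam t). ring. }
  rewrite !Rabs_mult, <- RPow_abs, (Rabs_right ga), (Rabs_right (exp _))
    by (try apply Rle_ge, Rlt_le, exp_pos; lra).
  apply Rmult_le_compat_r; [apply Rlt_le, exp_pos|]. apply Rmult_le_compat_l; [lra|].
  apply pow_incr. split; [apply Rabs_pos|now apply Rabs_sstate_le].
Qed.

Lemma Rabs_ctrl_state_le (t : R) : 0 <= t ->
  Rabs (ctrl k lam delta (x t) (ah t)) <=
    (k + lam) * (1 + 2 * lyap 0) + (Rabs la + (1 + 2 * ga * lyap 0)) * (1 + 2 * lyap 0) ^ 2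
    + delta / 2 * (1 + 2 * lyap 0) ^ 3 + delta / 2 * (1 + 2 * lyap 0).
Proof.
  intros Ht. assert (Hd := Rle_trans _ _ _ (Rabs_pos _) (Ha 0 (Rle_refl 0))).
  apply Rabs_ctrl_le; [lra|exact Hd|now apply Rabs_x_le|now apply Rabs_ah_le].
Qed.

Lemma ah_cvg : exists L : R, is_lim ah p_infty (Finite L).
Proof.
  apply (ex_lim_of_exp_decaying_derivative ah ahdot (ga * (1 + 2 * lyap 0) ^ 3) lam Hlam).
  - exact ah_derive.
  - intros t Ht. apply Rabs_ahdot_le. lra.
Qed.

End ClosedLoop.

Theorem mainTheorem4
  (a : R -> R) (la delta lam k ga : R) (x ah : R -> R)
  (Hpc : piecewise_continuous_nonneg a)
  (Hdelta : 0 < delta)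
  (Ha : forall t, 0 <= t -> Rabs (a t - la) <= delta)
  (Hlam : 0 < lam) (Hk : 0 < k) (Hga : 0 < ga)
  (Hx : forall t, 0 <= t ->
     is_RInt (fun r => ctrl k lam delta (x r) (ah r) + a r * x r ^ 2) 0 t (x t - x 0))
  (Hah : forall t, 0 <= t ->
     is_RInt (fun r => ga * mu lam r * (mu lam r * x r) * x r ^ 2) 0 t (ah t - ah 0)) :
  let s := fun t => mu lam t * x t in
  let u := fun t => ctrl k lam delta (x t) (ah t) in
  let V := fun t => 1 / 2 * s t ^ 2 + 1 / (2 * ga) * (la - ah t) ^ 2 in
  (forall t, 0 < t -> continuous a t ->
     exists d, is_derive V t d /\ d <= - k * s t ^ 2) /\
  (exists M, forall t, 0 <= t ->
     Rabs (s t) <= M /\ Rabs (ah t) <= M /\ Rabs (x t) <= M /\ Rabs (u t) <= M) /\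
  (exists C, forall t, 0 <= t -> Rabs (x t) <= C * exp (- lam * t)) /\
  (exists L : R, is_lim ah p_infty (Finite L)).
Proof.
  intros s u V.
  split; [exact (lyap_derive_le a la delta lam k ga x ah Ha Hga Hx Hah)|].
  split; [|split].
  - pose (V0 := lyap la lam ga x ah 0).
    pose (Bs := 1 + 2 * V0). pose (Bh := Rabs la + (1 + 2 * ga * V0)).
    pose (Bu := (k + lam) * Bs + Bh * Bs ^ 2 + delta / 2 * Bs ^ 3 + delta / 2 * Bs).
    exists (Rmax (Rmax Bs Bh) Bu). intros t Ht.
    assert (Hs := Rabs_sstate_le a la delta lam k ga x ah Hpc Ha Hk Hga Hx Hah t Ht).
    assert (Hh := Rabs_ah_le a la delta lam k ga x ah Hpc Ha Hk Hga Hx Hah t Ht).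
    assert (Hxt := Rabs_x_le a la delta lam k ga x ah Hpc Ha Hlam Hk Hga Hx Hah t Ht).
    assert (Hu := Rabs_ctrl_state_le a la delta lam k ga x ah Hpc Ha Hlam Hk Hga Hx Hah t Ht).
    assert (Rmax Bs Bh <= Rmax (Rmax Bs Bh) Bu) by apply Rmax_l.
    assert (Bs <= Rmax Bs Bh /\ Bh <= Rmax Bs Bh) by (split; [apply Rmax_l|apply Rmax_r]).
    assert (Bu <= Rmax (Rmax Bs Bh) Bu) by apply Rmax_r.
    unfold s, u; unfold sstate in Hs; unfold Bu, Bh, Bs, V0 in *. repeat split; lra.
  - exists (1 + 2 * lyap la lam ga x ah 0).
    exact (Rabs_x_le_exp a la delta lam k ga x ah Hpc Ha Hk Hga Hx Hah).
  - exact (ah_cvg a la delta lam k ga x ah Hpc Ha Hlam Hk Hga Hx Hah).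
Qed.
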